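(* Let $D$ be a distribution over $\mathcal{Z}$ and let $f:\mathbb{R}^d\times\mathcal{Z}\to\mathbb{R}$ be such that $f(\cdot;z)$ is convex and $L$-Lipschitz for every $z$. Fix $\eta>0$, $T\in\mathbb{N}$. Then there is a universal constant $C$ such that the GD iterates on the empirical risk and on the population risk satisfy \[ \forall t\in[T]:\quad \mathbb{E}_{S\sim D^n}\big[\|w_t^S-w_t^D\|\big]\le C\Big(\frac{\eta Lt}{\sqrt n}+\eta L\sqrt t\Big). \] (Explicitly, one may take $\mathbb{E}\|w_{t+1}^S-w_{t+1}^D\|\le \frac{4\eta L(t+1)}{\sqrt n}+4\eta L\sqrt{t+1}$.)
   Context: Empirical risk on $S=(z_1,\dots,z_n)$: $F_S(w)=\frac1n\sum_i f(w;z_i)$; population risk $F_D(w)=\mathbb{E}_{z\sim D}f(w;z)$. Fix a (measurable) subgradient selection $g(w;z)\in\partial_w f(w;z)$. GD on the sample: $w_0^S=0$, $w_{t+1}^S=w_t^S-\eta\frac1n\sum_{i=1}^n g(w_t^S;z_i)$. GD on the population: $w_0^D=0$, $w_{t+1}^D=w_t^D-\eta\,\mathbb{E}_{z\sim D}[g(w_t^D;z)]$. *)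

From HB Require Import structures.
From mathcomp Require Import all_boot all_order all_algebra.
From mathcomp Require Import all_classical all_reals all_analysis.
Set Implicit Arguments. Unset Strict Implicit. Unset Printing Implicit Defensive.
Import Order.TTheory GRing.Theory Num.Theory.
Local Open Scope classical_set_scope.
Local Open Scope ring_scope.

Section GDDefs.
Variable R : realType.
Variable d : nat.

Definition dotv (u v : 'rV[R]_d) : R := \sum_(j < d) u ord0 j * v ord0 j.
Definition normv (v : 'rV[R]_d) : R := Num.sqrt (dotv v v).

Definition convex_on_Rd (h : 'rV[R]_d -> R) : Prop :=
  forall (x y : 'rV[R]_d) (a : R), 0 <= a <= 1 ->
    h (a *: x + (1 - a) *: y) <= a * h x + (1 - a) * h y.

Definition lipschitz_Rd (L : R) (h : 'rV[R]_d -> R) : Prop :=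
  forall x y : 'rV[R]_d, `|h x - h y| <= L * normv (x - y).

Definition is_subgradient (h : 'rV[R]_d -> R) (w v : 'rV[R]_d) : Prop :=
  forall u : 'rV[R]_d, h w + dotv v (u - w) <= h u.

Fixpoint gd (G : 'rV[R]_d -> 'rV[R]_d) (eta : R) (t : nat) : 'rV[R]_d :=
  match t with
  | 0%N => 0
  | t'.+1 => let w := gd G eta t' in w - eta *: G w
  end.

Section WithZ.
Context (dZ : measure_display) (Z : measurableType dZ).

Definition emp_grad (n : nat) (g : 'rV[R]_d -> Z -> 'rV[R]_d) (S : 'I_n -> Z)
  (w : 'rV[R]_d) : 'rV[R]_d :=
  n%:R^-1 *: \sum_(i < n) g w (S i).

Definition pop_grad (D : probability Z R) (g : 'rV[R]_d -> Z -> 'rV[R]_d)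
  (w : 'rV[R]_d) : 'rV[R]_d :=
  \row_(j < d) Rintegral D setT (fun z => g w z ord0 j).

(* joint measurability of the selection (w,z) |-> g(w;z), expressed as:
   composing it with any measurable (w(.), z(.)) defined on any measurable
   space yields a measurable map (coordinatewise). *)
Definition measurable_selection (g : 'rV[R]_d -> Z -> 'rV[R]_d) : Prop :=
  forall (dO : measure_display) (O : measurableType dO)
         (h : O -> 'rV[R]_d) (zeta : O -> Z),
    (forall j : 'I_d, measurable_fun setT (fun o => h o ord0 j)) ->
    measurable_fun setT zeta ->
    forall j : 'I_d, measurable_fun setT (fun o => g (h o) (zeta o) ord0 j).

(* zs = (z_1,...,z_n) are i.i.d. random variables on (O,P), each with law D,
   i.e. the random sample S has law D^n. *)
Definition iid_sample (dO : measure_display) (O : measurableType dO)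
  (P : probability O R) (D : probability Z R) (n : nat) (zs : 'I_n -> O -> Z) : Prop :=
  [/\ (forall i, measurable_fun setT (zs i)),
      (forall i (A : set Z), measurable A -> P (zs i @^-1` A) = D A) &
      (forall A : 'I_n -> set Z, (forall i, measurable (A i)) ->
         P (\bigcap_(i in [set: 'I_n]) (zs i @^-1` A i)) =
         (\prod_(i < n) P (zs i @^-1` A i))%E)].
End WithZ.
End GDDefs.

From HB Require Import structures.
From mathcomp Require Import all_boot all_order all_algebra.
From mathcomp Require Import all_classical all_reals all_analysis.
From mathcomp Require Import ring lra measurable_realfun.
Import Order.TTheory GRing.Theory Num.Theory.
Local Open Scope classical_set_scope.
Local Open Scope ring_scope.

(* Both trajectories are gradient descent driven by monotone fields bounded by L
   (subgradient fields of convex L-Lipschitz losses).  Writing the empirical step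
   as the population step plus the gradient error at the population iterate w_s^D,
   the gap w_t^S - w_t^D moves by a monotone step, which raises its square by at
   most (2 eta L)^2, plus eta times that error.  Hence
     ||w_t^S - w_t^D|| <= 2 eta L sqrt t + eta sum_(s<t) ||(g_S - g_D)(w_s^D)||,
   and since w_s^D is deterministic, each error is the deviation of a mean of n
   i.i.d. vectors bounded by L, of expectation at most L / sqrt n. *)

Section EuclideanNorm.
Context {R : realType} {d : nat}.
Implicit Types u v w : 'rV[R]_d.

Lemma dotvC u v : dotv u v = dotv v u.
Proof. by apply: eq_bigr => j _; rewrite mulrC. Qed.

Lemma dotv0l w : dotv 0 w = 0.
Proof. by rewrite /dotv big1 // => j _; rewrite mxE mul0r. Qed.

Lemma dotvDl u v w : dotv (u + v) w = dotv u w + dotv v w.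
Proof. by rewrite /dotv -big_split; apply: eq_bigr => j _; rewrite mxE mulrDl. Qed.

Lemma dotvZl (k : R) u w : dotv (k *: u) w = k * dotv u w.
Proof. by rewrite /dotv mulr_sumr; apply: eq_bigr => j _; rewrite mxE mulrA. Qed.

Lemma dotvBl u v w : dotv (u - v) w = dotv u w - dotv v w.
Proof. by rewrite dotvDl -scaleN1r dotvZl mulN1r. Qed.

Lemma dotvDr u v w : dotv w (u + v) = dotv w u + dotv w v.
Proof. by rewrite dotvC dotvDl !(dotvC w). Qed.

Lemma dotvZr (k : R) u w : dotv w (k *: u) = k * dotv w u.
Proof. by rewrite dotvC dotvZl dotvC. Qed.

Lemma dotvBr u v w : dotv w (u - v) = dotv w u - dotv w v.
Proof. by rewrite dotvC dotvBl !(dotvC w). Qed.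

Lemma dotv_suml I (r : seq I) (P : pred I) (F : I -> 'rV[R]_d) w :
  dotv (\sum_(i <- r | P i) F i) w = \sum_(i <- r | P i) dotv (F i) w.
Proof. by elim/big_rec2: _ => [|i y1 y2 _ <-]; rewrite ?dotv0l ?dotvDl. Qed.

Lemma dotvv_ge0 u : 0 <= dotv u u.
Proof. by apply: sumr_ge0 => j _; rewrite -expr2 sqr_ge0. Qed.

Lemma dotvv_eq0 u : dotv u u = 0 -> u = 0.
Proof.
move=> uu0; apply/rowP => j; rewrite mxE.
have sqr_ge0' (k : 'I_d) : true -> 0 <= u ord0 k * u ord0 k.
  by move=> _; rewrite -expr2 sqr_ge0.
have /(_ j isT)/eqP := psumr_eq0P sqr_ge0' uu0.
by rewrite mulf_eq0 orbb => /eqP.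
Qed.

Lemma normv_ge0 u : 0 <= normv u.
Proof. exact: sqrtr_ge0. Qed.

Lemma sqr_normv u : normv u ^+ 2 = dotv u u.
Proof. by rewrite /normv sqr_sqrtr // dotvv_ge0. Qed.

Lemma normv0 : normv (0 : 'rV[R]_d) = 0.
Proof. by rewrite /normv dotv0l sqrtr0. Qed.

Lemma dotv_sqr_le u v : dotv u v ^+ 2 <= dotv u u * dotv v v.
Proof.
set a := dotv u u; set b := dotv v v; set c := dotv u v.
have [b0|bN0] := eqVneq b 0.
  by rewrite /c (dotvv_eq0 _ b0) dotvC dotv0l expr0n /= mulr_ge0 ?dotvv_ge0.
have b_gt0 : 0 < b by rewrite lt_def bN0 dotvv_ge0.
have := dotvv_ge0 (b *: u - c *: v).
rewrite dotvBl !dotvBr !dotvZl !dotvZr -/a -/b -/c (dotvC v u) -/c.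
have -> : b * (b * a) - b * (c * c) - (c * (b * c) - c * (c * b)) =
  b * (a * b - c ^+ 2) by ring.
by rewrite pmulr_rge0 // subr_ge0 mulrC.
Qed.

Lemma dotv_le_normv u v : dotv u v <= normv u * normv v.
Proof.
rewrite /normv -sqrtrM ?dotvv_ge0 //; apply: le_trans (ler_norm _) _.
by rewrite -sqrtr_sqr ler_wsqrtr // dotv_sqr_le.
Qed.

Lemma ler_normvD u v : normv (u + v) <= normv u + normv v.
Proof.
rewrite -(ler_pXn2r (n := 2)) // ?nnegrE ?addr_ge0 ?normv_ge0 //.
rewrite sqr_normv dotvDl !dotvDr sqrrD !sqr_normv (dotvC v u).
have := dotv_le_normv u v; lra.
Qed.

Lemma normvZ (k : R) u : normv (k *: u) = `|k| * normv u.
Proof. by rewrite /normv dotvZl dotvZr mulrA -expr2 sqrtrM ?sqr_ge0 // sqrtr_sqr. Qed.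

Lemma ler_normvB u v : normv (u - v) <= normv u + normv v.
Proof. by rewrite (le_trans (ler_normvD _ _)) // -scaleN1r normvZ normrN1 mul1r. Qed.

Lemma ler_normv_sum I (r : seq I) (P : pred I) (F : I -> 'rV[R]_d) :
  normv (\sum_(i <- r | P i) F i) <= \sum_(i <- r | P i) normv (F i).
Proof.
elim/big_rec2: _ => [|i y1 y2 _ IH]; first by rewrite normv0.
by rewrite (le_trans (ler_normvD _ _)) // lerD2l.
Qed.

Lemma ler_coord_normv v j : `|v ord0 j| <= normv v.
Proof.
rewrite -sqrtr_sqr ler_wsqrtr // /dotv (bigD1 j) //= expr2 lerDl.
by apply: sumr_ge0 => k _; rewrite -expr2 sqr_ge0.
Qed.

End EuclideanNorm.

Section GradientDescent.
Context {R : realType} {d : nat}.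
Implicit Types (u v w a b : 'rV[R]_d) (G : 'rV[R]_d -> 'rV[R]_d).

Definition monotone_map G := forall a b, 0 <= dotv (G a - G b) (a - b).

Lemma normv_subgradient_le (h : 'rV[R]_d -> R) (L : R) w v :
  0 <= L -> lipschitz_Rd L h -> is_subgradient h w v -> normv v <= L.
Proof.
move=> L_ge0 hL hsub; have := hsub (w + v); have := hL (w + v) w.
rewrite addrAC subrr add0r => lip subg.
have sqr_le : normv v ^+ 2 <= L * normv v.
  rewrite sqr_normv (le_trans _ lip) // (le_trans _ (ler_norm _)) //.
  by rewrite lerBrDl.
have [->//|vN0] := eqVneq (normv v) 0.
have v_gt0 : 0 < normv v by rewrite lt_def vN0 normv_ge0.
by move: sqr_le; rewrite expr2 ler_pM2r.
Qed.

Lemma subgradient_monotone (h : 'rV[R]_d -> R) a b ga gb :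
  is_subgradient h a ga -> is_subgradient h b gb -> 0 <= dotv (ga - gb) (a - b).
Proof. by move=> /(_ b) + /(_ a); rewrite !dotvBr !dotvBl; lra. Qed.

Lemma monotone_step_normv_sqr_le G (eta L : R) a b :
  0 <= eta -> (forall w, normv (G w) <= L) -> monotone_map G ->
  normv ((a - b) - eta *: (G a - G b)) ^+ 2 <= normv (a - b) ^+ 2 + (2 * eta * L) ^+ 2.
Proof.
move=> eta_ge0 GL Gmono; have := Gmono a b.
set del := a - b; set Dl := G a - G b => mono.
have L_ge0 : 0 <= L := le_trans (normv_ge0 _) (GL a).
have Dl_le : normv Dl <= 2 * L.
  by rewrite mulr2n mulrDl mul1r (le_trans (ler_normvB _ _)) ?lerD.
clearbody del Dl.
have DlDl_le : eta * (eta * dotv Dl Dl) <= eta ^+ 2 * (2 * L) ^+ 2.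
  rewrite mulrA -expr2 ler_wpM2l ?sqr_ge0 // -sqr_normv.
  by rewrite lerXn2r ?nnegrE ?normv_ge0 ?mulr_ge0.
have : 0 <= eta * dotv Dl del by rewrite mulr_ge0.
rewrite !sqr_normv dotvBl !dotvBr !dotvZl !dotvZr (dotvC del Dl) !exprMn; lra.
Qed.

Lemma sqrD_le_sqr_sqrt_succ (c E x : R) (t : nat) :
  0 <= c -> 0 <= E -> 0 <= x -> x <= c * Num.sqrt t%:R + E ->
  x ^+ 2 + c ^+ 2 <= (c * Num.sqrt t.+1%:R + E) ^+ 2.
Proof.
move=> c_ge0 E_ge0 x_ge0 x_le.
pose st : R := Num.sqrt t%:R; pose st1 : R := Num.sqrt t.+1%:R.
rewrite -/st -/st1 in x_le *.
have st_ge0 : 0 <= st by exact: sqrtr_ge0.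
have st_sqr : st ^+ 2 = t%:R by rewrite sqr_sqrtr.
have st1_sqr : st1 ^+ 2 = t%:R + 1 by rewrite sqr_sqrtr // -natr1.
have st_le : st <= st1 by rewrite ler_wsqrtr // ler_nat.
have : x ^+ 2 <= (c * st + E) ^+ 2 by rewrite !expr2 ler_pM.
have : c * E * st <= c * E * st1 by rewrite ler_wpM2l // mulr_ge0.
rewrite !sqrrD !exprMn st_sqr st1_sqr; lra.
Qed.

Lemma gd_gap_le GS GD (eta L : R) (t : nat) :
  0 < eta -> (forall w, normv (GS w) <= L) -> monotone_map GS ->
  normv (gd GS eta t - gd GD eta t) <=
    2 * eta * L * Num.sqrt t%:R +
    eta * \sum_(s < t) normv (GS (gd GD eta s) - GD (gd GD eta s)).
Proof.
move=> eta_gt0 GSL GSmono; have L_ge0 := le_trans (normv_ge0 _) (GSL 0).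
elim: t => [|t IH].
  by rewrite /= subrr normv0 big_ord0 sqrtr0 !mulr0 addr0.
rewrite big_ord_recr /= mulrDr addrA.
set a := gd GS eta t; set b := gd GD eta t; set E := eta * \sum_(s < t) _.
have E_ge0 : 0 <= E.
  by apply: mulr_ge0; [exact: ltW | apply: sumr_ge0 => s _; exact: normv_ge0].
have -> : a - eta *: GS a - (b - eta *: GD b) =
    ((a - b) - eta *: (GS a - GS b)) - eta *: (GS b - GD b).
  by apply/rowP => j; rewrite !mxE; ring.
rewrite (le_trans (ler_normvB _ _)) // normvZ ger0_norm ?(ltW eta_gt0) // lerD2r.
have c_ge0 : 0 <= 2 * eta * L by rewrite mulr_ge0 // mulr_ge0 // ltW.
have rhs_ge0 : 0 <= 2 * eta * L * Num.sqrt t.+1%:R + E.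
  by rewrite addr_ge0 // mulr_ge0 ?sqrtr_ge0.
rewrite -(ler_pXn2r (n := 2)) ?nnegrE ?normv_ge0 //.
rewrite (le_trans (monotone_step_normv_sqr_le _ _ _ a b (ltW eta_gt0) GSL GSmono)) //.
exact: (sqrD_le_sqr_sqrt_succ _ _ _ _ c_ge0 E_ge0 (normv_ge0 _) IH).
Qed.

Lemma normv_emp_grad_le {dZ : measure_display} {Z : measurableType dZ} {n : nat}
    (g : 'rV[R]_d -> Z -> 'rV[R]_d) (S : 'I_n -> Z) w (L : R) :
  0 <= L -> (forall w z, normv (g w z) <= L) -> normv (emp_grad g S w) <= L.
Proof.
move=> L_ge0 gL; rewrite /emp_grad normvZ ger0_norm ?invr_ge0 ?ler0n //.
case: n S => [|n] S; first by rewrite invr0 mul0r.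
apply: le_trans (_ : n.+1%:R^-1 * \sum_(i < n.+1) L <= L).
  rewrite ler_wpM2l ?invr_ge0 ?ler0n // (le_trans (ler_normv_sum _ _ _ _)) //.
  by apply: ler_sum => i _; exact: gL.
by rewrite sumr_const card_ord -(mulr_natl L) mulrA mulVf ?pnatr_eq0 // mul1r.
Qed.

Lemma emp_grad_monotone {dZ : measure_display} {Z : measurableType dZ} {n : nat}
    (g : 'rV[R]_d -> Z -> 'rV[R]_d) (S : 'I_n -> Z) :
  (forall z, monotone_map (g^~ z)) -> monotone_map (emp_grad g S).
Proof.
move=> gmono a b; rewrite /emp_grad -scalerBr -sumrB dotvZl dotv_suml.
by rewrite mulr_ge0 ?invr_ge0 ?ler0n // sumr_ge0 // => i _; exact: gmono.
Qed.

End GradientDescent.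

Section BoundedMeasurable.
Context {R : realType} {dT : measure_display} {T : measurableType dT}.
Implicit Types f g : T -> R.

Definition bounded_mfun f := measurable_fun setT f /\ exists M, forall x, `|f x| <= M.

Lemma bounded_mfun_cst (c : R) : bounded_mfun (fun _ => c).
Proof. by split; [exact: measurable_cst | exists `|c|]. Qed.

Lemma bounded_mfunD f g :
  bounded_mfun f -> bounded_mfun g -> bounded_mfun (fun x => f x + g x).
Proof.
move=> [mf [M fM]] [mg [N gN]]; split; first exact: measurable_funD.
by exists (M + N) => x; rewrite (le_trans (ler_normD _ _)) ?lerD.
Qed.

Lemma bounded_mfunB f g :
  bounded_mfun f -> bounded_mfun g -> bounded_mfun (fun x => f x - g x).
Proof.
move=> [mf [M fM]] [mg [N gN]]; split; first exact: measurable_funB.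
by exists (M + N) => x; rewrite (le_trans (ler_normB _ _)) ?lerD.
Qed.

Lemma bounded_mfunM f g :
  bounded_mfun f -> bounded_mfun g -> bounded_mfun (fun x => f x * g x).
Proof.
move=> [mf [M fM]] [mg [N gN]]; split; first exact: measurable_funM.
by exists (M * N) => x; rewrite normrM ler_pM.
Qed.

Lemma bounded_mfun_sum I (r : seq I) (F : I -> T -> R) :
  (forall i, bounded_mfun (F i)) -> bounded_mfun (fun x => \sum_(i <- r) F i x).
Proof.
move=> bF; elim: r => [|i r IH].
  by under eq_fun do rewrite big_nil; exact: bounded_mfun_cst.
by under eq_fun do rewrite big_cons; exact: bounded_mfunD.
Qed.

Variable mu : probability T R.

Lemma bounded_mfun_integrable f : bounded_mfun f -> mu.-integrable setT (EFin \o f).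
Proof.
move=> [mf [M fM]]; apply: measurable_bounded_integrable => //.
  by rewrite -ge0_fin_numE // fin_num_measure.
exists M; split; first by rewrite num_real.
by move=> y /ltW My x _; exact: le_trans (fM x) My.
Qed.

Lemma bounded_integral_EFin f :
  bounded_mfun f -> (\int[mu]_x (f x)%:E = (\int[mu]_x f x)%:E)%E.
Proof.
by move=> bf; rewrite /Rintegral fineK // integrable_fin_num // bounded_mfun_integrable.
Qed.

Lemma Rintegral_cst_probability (c : R) : \int[mu]_x c = c.
Proof. by rewrite Rintegral_cst // (congr1 fine (probability_setT mu)) mulr1. Qed.

Lemma bounded_RintegralD f g : bounded_mfun f -> bounded_mfun g ->
  \int[mu]_x (f x + g x) = \int[mu]_x f x + \int[mu]_x g x.
Proof. by move=> bf bg; rewrite RintegralD // bounded_mfun_integrable. Qed.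

Lemma bounded_RintegralB f g : bounded_mfun f -> bounded_mfun g ->
  \int[mu]_x (f x - g x) = \int[mu]_x f x - \int[mu]_x g x.
Proof. by move=> bf bg; rewrite RintegralB // bounded_mfun_integrable. Qed.

Lemma bounded_RintegralZl (k : R) f :
  bounded_mfun f -> \int[mu]_x (k * f x) = k * \int[mu]_x f x.
Proof. by move=> bf; rewrite RintegralZl // bounded_mfun_integrable. Qed.

Lemma bounded_le_Rintegral f g : bounded_mfun f -> bounded_mfun g ->
  (forall x, f x <= g x) -> \int[mu]_x f x <= \int[mu]_x g x.
Proof. by move=> bf bg fg; rewrite le_Rintegral // bounded_mfun_integrable. Qed.

Lemma bounded_Rintegral_sum I (r : seq I) (F : I -> T -> R) :
  (forall i, bounded_mfun (F i)) ->
  \int[mu]_x (\sum_(i <- r) F i x) = \sum_(i <- r) \int[mu]_x F i x.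
Proof.
move=> bF; elim: r => [|i r IH].
  by under eq_fun do rewrite big_nil; rewrite big_nil Rintegral_cst_probability.
under eq_fun do rewrite big_cons.
by rewrite big_cons bounded_RintegralD -?IH //; exact: bounded_mfun_sum.
Qed.

(* Integrate [x <= x^2 / (2 a) + a / 2] and take [a = K], or [a -> 0] if [K = 0]. *)
Lemma Rintegral_le_of_Rintegral_sqr_le f (K : R) : bounded_mfun f -> 0 <= K ->
  \int[mu]_x (f x ^+ 2) <= K ^+ 2 -> \int[mu]_x f x <= K.
Proof.
move=> bf K_ge0 f2_le.
have amgm a : 0 < a -> \int[mu]_x f x <= K ^+ 2 / (2 * a) + a / 2.
  move=> a_gt0; have a2_gt0 : 0 < 2 * a by rewrite mulr_gt0.
  have bf2 : bounded_mfun (fun x => (2 * a)^-1 * f x ^+ 2).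
    by apply: bounded_mfunM; [exact: bounded_mfun_cst | apply: bounded_mfunM].
  apply: le_trans (_ : \int[mu]_x ((2 * a)^-1 * f x ^+ 2 + a / 2) <= _).
    apply: bounded_le_Rintegral => // [|x].
      by apply: bounded_mfunD => //; exact: bounded_mfun_cst.
    have -> : (2 * a)^-1 * f x ^+ 2 + a / 2 = (f x ^+ 2 + a ^+ 2) / (2 * a).
      by field; rewrite gt_eqF.
    by rewrite ler_pdivlMr //; have := sqr_ge0 (f x - a); rewrite sqrrB; lra.
  rewrite bounded_RintegralD //; last exact: bounded_mfun_cst.
  rewrite bounded_RintegralZl; last exact: bounded_mfunM.
  by rewrite Rintegral_cst_probability lerD2r mulrC ler_wpM2r // invr_ge0 ltW.
have [K0|KN0] := eqVneq K 0.
  rewrite K0 in amgm *; apply/ler_addgt0Pr => eps eps_gt0; rewrite add0r.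
  have := amgm (2 * eps) (mulr_gt0 (ltr0Sn _ 1) eps_gt0).
  by rewrite expr0n /= mul0r add0r (mulrC 2 eps) mulfK.
have K_gt0 : 0 < K by rewrite lt_def KN0 K_ge0.
have amgm_eq : K ^+ 2 / (2 * K) + K / 2 = K by field; rewrite gt_eqF.
by rewrite -[leRHS]amgm_eq; exact: amgm.
Qed.

End BoundedMeasurable.

Lemma bounded_mfun_comp {R : realType} {dT dU : measure_display}
    {T : measurableType dT} {U : measurableType dU}
    {phi : U -> R} {z : T -> U} :
  bounded_mfun phi -> measurable_fun setT z -> bounded_mfun (phi \o z).
Proof.
move=> [mphi [M phiM]] mz; split; first exact: measurableT_comp.
by exists M => x; exact: phiM.
Qed.

Lemma Rintegral_comp_law {R : realType} {dO dU : measure_display}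
    {O : measurableType dO} {U : measurableType dU}
    (P : probability O R) (mu : probability U R) (z : O -> U) (phi : U -> R) :
  measurable_fun setT z -> (forall A, measurable A -> P (z @^-1` A) = mu A) ->
  bounded_mfun phi -> \int[P]_o phi (z o) = \int[mu]_u phi u.
Proof.
move=> mz law bphi; rewrite /Rintegral; congr fine.
transitivity (\int[pushforward P z]_u (phi u)%:E)%E.
  rewrite integral_pushforward // ?preimage_setT.
    by case: bphi => + _ => /measurable_EFinP.
  exact (bounded_mfun_integrable P _ (bounded_mfun_comp bphi mz)).
by apply: eq_measure_integral => A mA _; exact: law.
Qed.

Lemma Rintegral_prod_mul {R : realType} {d1 d2 : measure_display}
    {T1 : measurableType d1} {T2 : measurableType d2}
    (mu1 : probability T1 R) (mu2 : probability T2 R) (phi : T1 -> R) (psi : T2 -> R) :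
  bounded_mfun phi -> bounded_mfun psi ->
  \int[(mu1 \x mu2)%E]_x (phi x.1 * psi x.2) = \int[mu1]_x phi x * \int[mu2]_y psi y.
Proof.
move=> bphi bpsi.
have bF : bounded_mfun (fun x : T1 * T2 => phi x.1 * psi x.2).
  exact: bounded_mfunM (bounded_mfun_comp bphi measurable_fst)
                       (bounded_mfun_comp bpsi measurable_snd).
apply: EFin_inj; rewrite -bounded_integral_EFin //.
rewrite -integral12_prod_meas1; last exact: bounded_mfun_integrable.
transitivity (\int[mu1]_x (\int[mu2]_y psi y * phi x)%:E)%E.
  apply: eq_integral => x _; rewrite /fubini_F /= bounded_integral_EFin.
    by rewrite bounded_RintegralZl // mulrC.
  by apply: bounded_mfunM => //; exact: bounded_mfun_cst.
rewrite bounded_integral_EFin ?bounded_RintegralZl 1?mulrC //.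
by apply: bounded_mfunM => //; exact: bounded_mfun_cst.
Qed.

Section IidSample.
Context {R : realType} {dZ : measure_display} {Z : measurableType dZ}
  {D : probability Z R} {dO : measure_display} {O : measurableType dO}
  {P : probability O R} {n : nat} {zs : 'I_n -> O -> Z}.
Hypothesis zs_iid : iid_sample P D zs.

Lemma iid_measurable i : measurable_fun setT (zs i).
Proof. by case: zs_iid. Qed.

Lemma iid_Rintegral_comp i (phi : Z -> R) :
  bounded_mfun phi -> \int[P]_o phi (zs i o) = \int[D]_z phi z.
Proof.
apply: Rintegral_comp_law; first exact: iid_measurable.
by case: zs_iid => _ law _; exact: law.
Qed.

Lemma iid_pair_rect i k (A B : set Z) : i != k -> measurable A -> measurable B ->
  P ((fun o => (zs i o, zs k o)) @^-1` (A `*` B)) = (D A * D B)%E.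
Proof.
move=> ik mA mB; case: zs_iid => _ law indep.
pose Af l := if l == i then A else if l == k then B else setT.
have mAf l : measurable (Af l) by rewrite /Af; case: ifP => _ //; case: ifP.
have -> : (fun o => (zs i o, zs k o)) @^-1` (A `*` B) =
    \bigcap_(l in [set: 'I_n]) (zs l @^-1` Af l).
  apply/seteqP; split => o /=.
    move=> [Ao Bo] l _; rewrite /Af.
    by case: ifP => [/eqP -> //|_]; case: ifP => [/eqP -> //|_].
  move=> ABo; split; first by have := ABo i I; rewrite /Af eqxx.
  by have := ABo k I; rewrite /Af eq_sym (negbTE ik) eqxx.
rewrite indep // (bigD1 i) //= (bigD1 k) 1?eq_sym //= big1 ?mule1.
  by rewrite /Af eqxx eq_sym (negbTE ik) eqxx !law.
move=> l /andP [li lk]; rewrite /Af (negbTE li) (negbTE lk) preimage_setT.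
exact: probability_setT.
Qed.

Lemma iid_Rintegral_mul i k (phi psi : Z -> R) : i != k ->
  bounded_mfun phi -> bounded_mfun psi ->
  \int[P]_o (phi (zs i o) * psi (zs k o)) = \int[D]_z phi z * \int[D]_z psi z.
Proof.
move=> ik bphi bpsi; rewrite -Rintegral_prod_mul //.
have mpair : measurable_fun setT (fun o => (zs i o, zs k o)).
  by apply: measurable_fun_pair; exact: iid_measurable.
apply: (Rintegral_comp_law P _ _ (fun x => phi x.1 * psi x.2) mpair).
  move=> X mX; rewrite -[LHS]/(pushforward P (fun o => (zs i o, zs k o)) X).
  by symmetry; apply: product_measure_unique => // A B mA mB; exact: iid_pair_rect.
exact: bounded_mfunM (bounded_mfun_comp bphi measurable_fst)
                     (bounded_mfun_comp bpsi measurable_snd).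
Qed.

End IidSample.

Lemma Rintegral_sqr_centered_le {R : realType} {dT : measure_display}
    {T : measurableType dT} (mu : probability T R) (f : T -> R) :
  bounded_mfun f -> \int[mu]_x ((f x - \int[mu]_y f y) ^+ 2) <= \int[mu]_x (f x ^+ 2).
Proof.
move=> bf; set m := \int[mu]_y f y.
have bf2 : bounded_mfun (fun x => f x ^+ 2) by exact: bounded_mfunM.
have b2f : bounded_mfun (fun x => 2 * f x).
  by apply: bounded_mfunM => //; exact: bounded_mfun_cst.
have bcross : bounded_mfun (fun x => 2 * f x - m).
  by apply: bounded_mfunB => //; exact: bounded_mfun_cst.
have -> : (fun x => (f x - m) ^+ 2) = (fun x => f x ^+ 2 - m * (2 * f x - m)).
  by apply/funext => x; ring.
rewrite bounded_RintegralB //; last first.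
  by apply: bounded_mfunM => //; exact: bounded_mfun_cst.
rewrite bounded_RintegralZl // bounded_RintegralB //; last exact: bounded_mfun_cst.
rewrite bounded_RintegralZl // Rintegral_cst_probability -/m.
have -> : m * (2 * m - m) = m ^+ 2 by ring.
by rewrite gerBl sqr_ge0.
Qed.

Lemma measurable_normv {R : realType} {d : nat} {dT : measure_display}
    {T : measurableType dT} (u : T -> 'rV[R]_d) :
  (forall j, measurable_fun setT (fun x => u x ord0 j)) ->
  measurable_fun setT (fun x => normv (u x)).
Proof.
move=> mu; apply: (measurableT_comp (continuous_measurable_fun (@sqrt_continuous R))).
by apply: measurable_sum => j; exact: measurable_funM.
Qed.

Section EmpiricalMean.
Context {R : realType} {d : nat} {dZ : measure_display} {Z : measurableType dZ}
  {D : probability Z R} {dO : measure_display} {O : measurableType dO}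
  {P : probability O R} {n : nat} {zs : 'I_n -> O -> Z}.
Hypothesis zs_iid : iid_sample P D zs.
Hypothesis n_gt0 : (0 < n)%N.
Variables (h : Z -> 'rV[R]_d) (L : R).
Hypothesis L_ge0 : 0 <= L.
Hypothesis hL : forall z, normv (h z) <= L.
Hypothesis h_measurable : forall j, measurable_fun setT (fun z => h z ord0 j).

Let hj j z : R := h z ord0 j.
Let centered i j o := hj j (zs i o) - \int[D]_z hj j z.
Let dev o := n%:R^-1 *: \sum_(i < n) h (zs i o) - \row_(j < d) \int[D]_z hj j z.

Lemma bounded_mfun_coord j : bounded_mfun (hj j).
Proof.
split; first exact: h_measurable.
by exists L => z; exact: le_trans (ler_coord_normv _ _) (hL z).
Qed.

Lemma bounded_mfun_centered i j : bounded_mfun (centered i j).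
Proof.
apply: bounded_mfunB; last exact: bounded_mfun_cst.
exact (bounded_mfun_comp (bounded_mfun_coord j) (iid_measurable zs_iid i)).
Qed.

Lemma iid_centered_cross i k j : i != k ->
  \int[P]_o (centered i j o * centered k j o) = 0.
Proof.
have bc : bounded_mfun (fun z => hj j z - \int[D]_y hj j y).
  by apply: bounded_mfunB; [exact: bounded_mfun_coord | exact: bounded_mfun_cst].
move=> ik; rewrite (iid_Rintegral_mul zs_iid _ _ _ _ ik bc bc) bounded_RintegralB.
- by rewrite Rintegral_cst_probability subrr mul0r.
- exact: bounded_mfun_coord.
- exact: bounded_mfun_cst.
Qed.

Lemma iid_centered_sqr_le i j :
  \int[P]_o (centered i j o ^+ 2) <= \int[D]_z (hj j z ^+ 2).
Proof.
rewrite (iid_Rintegral_comp zs_iid i (fun z => (hj j z - \int[D]_y hj j y) ^+ 2)).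
  exact: Rintegral_sqr_centered_le (bounded_mfun_coord j).
by apply: bounded_mfunM; apply: bounded_mfunB;
  solve [exact: bounded_mfun_coord | exact: bounded_mfun_cst].
Qed.

Lemma dev_coord o j : dev o ord0 j = n%:R^-1 * \sum_(i < n) centered i j o.
Proof.
rewrite /dev /centered !mxE summxE sumrB sumr_const card_ord.
rewrite -[(\int[D]_z hj j z) *+ n]mulr_natl.
by rewrite mulrBr mulrA mulVf ?mul1r // pnatr_eq0 -lt0n.
Qed.

Lemma Rintegral_sqr_dev_coord_le j :
  \int[P]_o (dev o ord0 j ^+ 2) <= n%:R^-1 * \int[D]_z (hj j z ^+ 2).
Proof.
pose c : R := n%:R^-1 * n%:R^-1.
have bc i k : bounded_mfun (fun o => c * (centered i j o * centered k j o)).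
  by apply: bounded_mfunM; [exact: bounded_mfun_cst | apply: bounded_mfunM];
    exact: bounded_mfun_centered.
have -> : (fun o => dev o ord0 j ^+ 2) =
    (fun o => \sum_(i < n) \sum_(k < n) c * (centered i j o * centered k j o)).
  apply/funext => o; rewrite dev_coord expr2 mulrACA mulr_suml mulr_sumr.
  by apply: eq_bigr => i _; rewrite !mulr_sumr.
rewrite bounded_Rintegral_sum => [|i]; last exact: bounded_mfun_sum.
apply: le_trans (_ : \sum_(i < n) c * \int[D]_z (hj j z ^+ 2) <= _).
  apply: ler_sum => i _.
  rewrite bounded_Rintegral_sum // (bigD1 i) //= big1 => [|k ki].
    rewrite addr0 bounded_RintegralZl -?expr2 ?ler_wpM2l ?iid_centered_sqr_le //.
      by rewrite mulr_ge0 // invr_ge0 ler0n.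
    by apply: bounded_mfunM; exact: bounded_mfun_centered.
  rewrite bounded_RintegralZl ?iid_centered_cross ?mulr0 1?eq_sym //.
  by apply: bounded_mfunM; exact: bounded_mfun_centered.
rewrite sumr_const card_ord -[_ *+ n]mulr_natl /c !mulrA mulfV ?mul1r //.
by rewrite pnatr_eq0 -lt0n.
Qed.

Lemma bounded_mfun_dev_coord j : bounded_mfun (fun o => dev o ord0 j).
Proof.
under eq_fun do rewrite dev_coord.
apply: bounded_mfunM; first exact: bounded_mfun_cst.
by apply: bounded_mfun_sum => i; exact: bounded_mfun_centered.
Qed.

Lemma Rintegral_dotv_dev_le : \int[P]_o dotv (dev o) (dev o) <= L ^+ 2 / n%:R.
Proof.
have bsqr j : bounded_mfun (fun o => dev o ord0 j ^+ 2).
  by apply: bounded_mfunM; exact: bounded_mfun_dev_coord.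
have bhsqr j : bounded_mfun (fun z => hj j z ^+ 2).
  by apply: bounded_mfunM; exact: bounded_mfun_coord.
under eq_fun do rewrite /dotv; under eq_fun do under eq_bigr do rewrite -expr2.
rewrite bounded_Rintegral_sum //.
apply: le_trans (_ : \sum_(j < d) n%:R^-1 * \int[D]_z (hj j z ^+ 2) <= _).
  by apply: ler_sum => j _; exact: Rintegral_sqr_dev_coord_le.
rewrite -mulr_sumr -bounded_Rintegral_sum // mulrC ler_wpM2r ?invr_ge0 ?ler0n //.
apply: le_trans (_ : \int[D]_z (L ^+ 2) <= _); last by rewrite Rintegral_cst_probability.
apply: bounded_le_Rintegral => [||z]; first exact: bounded_mfun_sum.
  exact: bounded_mfun_cst.
have -> : \sum_(j < d) hj j z ^+ 2 = normv (h z) ^+ 2.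
  by rewrite sqr_normv; apply: eq_bigr => j _; rewrite expr2.
by rewrite lerXn2r ?nnegrE ?normv_ge0.
Qed.

Lemma bounded_mfun_normv_dev : bounded_mfun (fun o => normv (dev o)).
Proof.
split; first by apply: measurable_normv => j; case: (bounded_mfun_dev_coord j).
exists (L + normv (\row_(j < d) \int[D]_z hj j z)) => o.
rewrite ger0_norm ?normv_ge0 // (le_trans (ler_normvB _ _)) // lerD2r.
exact (normv_emp_grad_le (fun _ => h) (fun i => zs i o) 0 _ L_ge0 (fun _ => hL)).
Qed.

Lemma Rintegral_normv_dev_le : \int[P]_o normv (dev o) <= L / Num.sqrt n%:R.
Proof.
have sqrtn_gt0 : 0 < Num.sqrt n%:R :> R by rewrite sqrtr_gt0 ltr0n.
apply: Rintegral_le_of_Rintegral_sqr_le bounded_mfun_normv_dev _ _.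
  by rewrite divr_ge0 // ltW.
under eq_fun do rewrite sqr_normv.
by rewrite expr_div_n sqr_sqrtr ?ler0n //; exact: Rintegral_dotv_dev_le.
Qed.

End EmpiricalMean.

Lemma measurable_gd_emp_coord {R : realType} {d : nat} {dZ dO : measure_display}
    {Z : measurableType dZ} {O : measurableType dO} {n : nat}
    (zs : 'I_n -> O -> Z) (g : 'rV[R]_d -> Z -> 'rV[R]_d) (eta : R) :
  measurable_selection g -> (forall i, measurable_fun setT (zs i)) ->
  forall t j,
    measurable_fun setT (fun o => gd (emp_grad g (fun i => zs i o)) eta t ord0 j).
Proof.
move=> g_meas zs_meas; elim=> [|t IH] j /=.
  by under eq_fun do rewrite mxE; exact: measurable_cst.
under eq_fun do rewrite /emp_grad !mxE summxE.
apply: measurable_funB; first exact: IH.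
do 2 (apply: measurable_funM; first exact: measurable_cst).
by apply: measurable_sum => i; exact: g_meas.
Qed.

Section GDStability.
Context {R : realType} {d : nat} {dZ : measure_display} {Z : measurableType dZ}
  {D : probability Z R} {dO : measure_display} {O : measurableType dO}
  {P : probability O R} {n : nat} {zs : 'I_n -> O -> Z}.
Hypothesis zs_iid : iid_sample P D zs.
Hypothesis n_gt0 : (0 < n)%N.
Variables (g : 'rV[R]_d -> Z -> 'rV[R]_d) (L eta : R).
Hypothesis L_ge0 : 0 <= L.
Hypothesis gL : forall w z, normv (g w z) <= L.
Hypothesis g_monotone : forall z, monotone_map (g^~ z).
Hypothesis g_measurable : measurable_selection g.
Hypothesis eta_gt0 : 0 < eta.

Let wD s := gd (pop_grad D g) eta s.
Let dev s o := normv (emp_grad g (fun i => zs i o) (wD s) - pop_grad D g (wD s)).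

Lemma measurable_selection_at w j : measurable_fun setT (fun z => g w z ord0 j).
Proof.
exact (g_measurable _ _ (fun _ => w) (fun z => z) (fun k => measurable_cst _)
  (@measurable_id _ _ _) j).
Qed.

Lemma bounded_mfun_dev s : bounded_mfun (dev s).
Proof.
exact (bounded_mfun_normv_dev zs_iid n_gt0 _ _ L_ge0 (gL _) (measurable_selection_at _)).
Qed.

Lemma Rintegral_dev_le s : \int[P]_o dev s o <= L / Num.sqrt n%:R.
Proof.
exact (Rintegral_normv_dev_le zs_iid n_gt0 _ _ L_ge0 (gL _) (measurable_selection_at _)).
Qed.

Lemma integral_gd_gap_le t :
  (\int[P]_o (normv (gd (emp_grad g (fun i => zs i o)) eta t - wD t))%:E
    <= (2 * eta * L * Num.sqrt t%:R + eta * (t%:R * (L / Num.sqrt n%:R)))%:E)%E.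
Proof.
pose bound o := 2 * eta * L * Num.sqrt t%:R + eta * \sum_(s < t) dev s o.
have bbound : bounded_mfun bound.
  apply: bounded_mfunD; first exact: bounded_mfun_cst.
  apply: bounded_mfunM; first exact: bounded_mfun_cst.
  by apply: bounded_mfun_sum => s; exact: bounded_mfun_dev.
apply: (@le_trans _ _ (\int[P]_o (bound o)%:E)%E).
  apply: ge0_le_integral => //.
  - by move=> o _; rewrite lee_fin normv_ge0.
  - apply/measurable_EFinP; apply: measurable_normv => j.
    rewrite (_ : (fun o => _) = (fun o =>
      gd (emp_grad g (fun i => zs i o)) eta t ord0 j - wD t ord0 j)).
      apply: measurable_funB; last exact: measurable_cst.
      exact: measurable_gd_emp_coord g_measurable (iid_measurable zs_iid) t j.
    by apply/funext => o; rewrite !mxE.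
  - by case: bbound => mbound _; exact/measurable_EFinP.
  - move=> o _; rewrite lee_fin; apply: gd_gap_le => //.
      by move=> w; exact: normv_emp_grad_le.
    exact: emp_grad_monotone.
rewrite bounded_integral_EFin // lee_fin bounded_RintegralD; first last.
- apply: bounded_mfunM; first exact: bounded_mfun_cst.
  by apply: bounded_mfun_sum => s; exact: bounded_mfun_dev.
- exact: bounded_mfun_cst.
rewrite Rintegral_cst_probability lerD2l bounded_RintegralZl; last first.
  by apply: bounded_mfun_sum => s; exact: bounded_mfun_dev.
apply: ler_wpM2l; first exact: ltW.
rewrite bounded_Rintegral_sum => [|s]; last exact: bounded_mfun_dev.
apply: le_trans (_ : \sum_(s < t) (L / Num.sqrt n%:R) <= _).
  by apply: ler_sum => s _; exact: Rintegral_dev_le.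
by rewrite sumr_const card_ord mulr_natl.
Qed.

End GDStability.

Theorem lemma5p1 (R : realType) :
  exists C : R,
  forall (d : nat) (dZ : measure_display) (Z : measurableType dZ)
    (D : probability Z R)
    (f : 'rV[R]_d -> Z -> R) (g : 'rV[R]_d -> Z -> 'rV[R]_d) (L : R),
    0 <= L ->
    (forall z, convex_on_Rd (fun w => f w z)) ->
    (forall z, lipschitz_Rd L (fun w => f w z)) ->
    (forall w z, is_subgradient (fun u => f u z) w (g w z)) ->
    measurable_selection g ->
  forall (eta : R) (T : nat), 0 < eta ->
  forall (n : nat), (0 < n)%N ->
  forall (dO : measure_display) (O : measurableType dO) (P : probability O R)
    (zs : 'I_n -> O -> Z),
    iid_sample P D zs ->
  forall t : nat, (1 <= t <= T)%N ->
    (\int[P]_o (normv (gd (emp_grad g (fun i => zs i o)) eta t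
                       - gd (pop_grad D g) eta t))%:E
     <= (C * (eta * L * t%:R / Num.sqrt n%:R + eta * L * Num.sqrt t%:R))%:E)%E.
Proof.
exists 2 => d dZ Z D f g L L_ge0 _ f_lip g_sub g_meas eta T eta_gt0 n n_gt0
  dO O P zs zs_iid t _.
have gL w z : normv (g w z) <= L.
  exact: normv_subgradient_le L_ge0 (f_lip z) (g_sub w z).
have g_mono z : monotone_map (g^~ z).
  by move=> a b; exact: subgradient_monotone (g_sub a z) (g_sub b z).
apply: le_trans
  (integral_gd_gap_le zs_iid n_gt0 _ _ _ L_ge0 gL g_mono g_meas eta_gt0 t) _.
have sqrtn_gt0 : 0 < Num.sqrt n%:R :> R by rewrite sqrtr_gt0 ltr0n.
have stat_ge0 : 0 <= eta * L * t%:R / Num.sqrt n%:R.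
  by rewrite divr_ge0 ?(ltW sqrtn_gt0) // mulr_ge0 ?ler0n // mulr_ge0 // ltW.
have -> : eta * (t%:R * (L / Num.sqrt n%:R)) = eta * L * t%:R / Num.sqrt n%:R by ring.
rewrite lee_fin; lra.
Qed.
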